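(* Consider the random pairwise load balancing process on $n\ge 2$ nodes with initial load vector $\ell(0)\in\mathbb{N}_0^n$ and initial discrepancy $\Delta=\max_i\ell_i(0)-\min_i\ell_i(0)\ge 1$. Let $T_1$ be the first time step $t$ with $\Phi(\ell(t)) < n$. Then with high probability (probability $1-O(1/n)$), $T_1 = O(n\log n + n\log\Delta)$, with an absolute constant in the $O(\cdot)$.
   Context: Random pairwise load balancing process: $n$ nodes (complete graph), $m$ indistinguishable tokens. The load vector at time $t\in\mathbb{N}_0$ is $\ell(t)=(\ell_1(t),\dots,\ell_n(t))$, $\ell_i(t)$ the number of tokens at node $i$. In each time step $t$, independently of everything before, an ordered pair $(u,v)$ of distinct nodes is chosen uniformly at random, and the loads are updated to $\ell_u(t+1)=\lceil(\ell_u(t)+\ell_v(t))/2\rceil$, $\ell_v(t+1)=\lfloor(\ell_u(t)+\ell_v(t))/2\rfloor$; other loads unchanged. The average load is $\varnothing=m/n$. The potential of a load vector $\ell$ is $\Phi(\ell)=\sum_{i=1}^n(\ell_i-\varnothing)^2$. *)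

From HB Require Import structures.
From mathcomp Require Import all_boot all_order all_algebra.
Set Implicit Arguments. Unset Strict Implicit. Unset Printing Implicit Defensive.
Import Order.TTheory GRing.Theory Num.Theory.

Definition load (n : nat) := {ffun 'I_n -> nat}.

Definition tokens n (l : load n) : nat := \sum_(i < n) l i.

Definition Phi n (l : load n) : rat :=
  (\sum_(i < n) (((l i)%:R - (tokens l)%:R / n%:R) ^+ 2))%R.

Definition disc n (l : load n) : nat :=
  \max_(i < n) l i - \big[minn/(\max_(i < n) l i)]_(i < n) l i.

Definition step n (l : load n) (p : 'I_n * 'I_n) : load n :=
  let: (u, v) := p in
  [ffun i => if i == u then uphalf (l u + l v)
             else if i == v then (l u + l v)./2 else l i].

Definition loads_after n (l0 : load n) (s : seq ('I_n * 'I_n)) (k : nat) : load n :=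
  foldl (@step n) l0 (take k s).

Definition admissible n (s : seq ('I_n * 'I_n)) : bool :=
  all (fun p : 'I_n * 'I_n => p.1 != p.2) s.

Definition T1_gt n (l0 : load n) t (s : t.-tuple ('I_n * 'I_n)) : bool :=
  [forall k : 'I_t.+1, (n%:R <= Phi (loads_after l0 s k))%R].

(* Pr[T_1 > t]: the t choices are i.i.d. uniform ordered pairs of distinct
   nodes, i.e. the uniform distribution on admissible t-tuples. *)
Definition prob_T1_gt n (l0 : load n) (t : nat) : rat :=
  (#|[set s : t.-tuple ('I_n * 'I_n) | admissible s && T1_gt l0 s]|%:R
   / #|[set s : t.-tuple ('I_n * 'I_n) | admissible s]|%:R)%R.

(* Whenever Phi >= n, a uniformly random step decreases Phi in expectation by
   a factor 1 - 1/(2n): balancing the pair (u, v) removes (l_u - l_v)^2 / 2 up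
   to a rounding loss of 1/2, and the squared differences over all ordered
   pairs add up to 2 n Phi.  Hence E[Phi(l(t)); T_1 > t] <= (1 - 1/(2n))^t Phi(l(0)),
   and Markov's inequality with Phi >= n on {T_1 > t} gives
   Pr[T_1 > t] <= (1 - 1/(2n))^t Phi(l(0)) / n.  Since Phi(l(0)) <= n Delta^2
   and (1 - 1/(2n))^(2n) <= 1/2, taking t = 8 (n log n + n log Delta) makes
   this at most 1/n. *)
From HB Require Import structures.
From mathcomp Require Import all_boot all_order all_algebra.
From mathcomp Require Import ring lra zify.
Import Order.TTheory GRing.Theory Num.Theory.
Set Implicit Arguments. Unset Strict Implicit.
Local Open Scope ring_scope.

Lemma sum_sqrB (R : comNzRingType) (I : finType) (x : I -> R) (a : R) :
  \sum_i (x i - a) ^+ 2 = \sum_i x i ^+ 2 - 2 * a * \sum_i x i + #|I|%:R * a ^+ 2.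
Proof.
rewrite (eq_bigr (fun i => x i ^+ 2 - 2 * a * x i + a ^+ 2)); last by move=> i _; ring.
rewrite big_split /= sumrB -mulr_sumr sumr_const.
by congr (_ + _); rewrite mulr_natl.
Qed.

Lemma Bernoulli_pow_le1 (R : realDomainType) (x : R) k :
  0 <= x -> x <= 1 -> (1 - x) ^+ k * (1 + k%:R * x) <= 1.
Proof.
move=> x0 x1; elim: k => [|k IH]; first by rewrite expr0 mul0r addr0 mulr1.
have y0 : 0 <= (1 - x) ^+ k by apply: exprn_ge0; lra.
set y := (1 - x) ^+ k in IH y0 *.
have k0 : (0 : R) <= k%:R by apply: ler0n.
have loss : 0 <= y * (x * x) * (k%:R + 1) by apply: mulr_ge0; [apply: mulr_ge0 => //; nra | lra].
have -> : (1 - x) ^+ k.+1 * (1 + k.+1%:R * x) =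
          y * (1 + k%:R * x) - y * (x * x) * (k%:R + 1) by rewrite exprS -natr1 /y; ring.
lra.
Qed.

Lemma uphalf_addn_half S : (uphalf S + S./2)%N = S.
Proof. by rewrite uphalf_half -addnA addnn odd_double_half. Qed.

Section Potential.
Variable n : nat.
Hypothesis n_gt0 : (0 < n)%N.

Let n_neq0 : (n%:R : rat) != 0. Proof. by rewrite pnatr_eq0 -lt0n. Qed.

Lemma tokensE (l : load n) : (tokens l)%:R = \sum_(i < n) ((l i)%:R : rat).
Proof. by rewrite /tokens natr_sum. Qed.

Lemma Phi_ge0 (l : load n) : 0 <= Phi l.
Proof. by apply: sumr_ge0 => i _; apply: sqr_ge0. Qed.

Lemma Phi_shift (l : load n) (a : rat) :
  \sum_(i < n) ((l i)%:R - a) ^+ 2 = Phi l + n%:R * ((tokens l)%:R / n%:R - a) ^+ 2.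
Proof.
rewrite /Phi !sum_sqrB -tokensE card_ord.
by set m := (tokens l)%:R : rat; set S := \sum_(i < n) _; field.
Qed.

Lemma PhiE (l : load n) :
  Phi l = \sum_(i < n) ((l i)%:R : rat) ^+ 2 - (tokens l)%:R ^+ 2 / n%:R.
Proof.
have := Phi_shift l 0; under eq_bigr do rewrite subr0.
by move=> ->; rewrite subr0; field.
Qed.

Lemma Phi_le_disc (l : load n) : Phi l <= n%:R * (disc l)%:R ^+ 2.
Proof.
set mx := \max_(i < n) l i; set mn := \big[minn/mx]_(i < n) l i.
have dev_ge0 i : (0 : rat) <= (l i)%:R - mn%:R by rewrite subr_ge0 ler_nat; exact: (bigmin_le mx i l).
have dev_le i : ((l i)%:R : rat) - mn%:R <= (disc l)%:R.
  rewrite /disc -/mx -/mn natrB ?lerD2r ?ler_nat ?leq_bigmax //.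
  exact: leq_trans (bigmin_le mx i l) (leq_bigmax i).
apply: le_trans (_ : \sum_(i < n) (((l i)%:R : rat) - mn%:R) ^+ 2 <= _).
  by rewrite Phi_shift lerDl mulr_ge0 ?ler0n ?sqr_ge0.
apply: le_trans (_ : \sum_(i < n) ((disc l)%:R : rat) ^+ 2 <= _).
  by apply: ler_sum => i _; rewrite ler_sqr ?dev_le ?nnegrE ?dev_ge0 ?ler0n.
by rewrite sumr_const card_ord mulr_natl.
Qed.

Lemma sum_step (l : load n) u v (g : nat -> rat) : u != v ->
  \sum_(i < n) g (step l (u, v) i) + g (l u) + g (l v) =
  \sum_(i < n) g (l i) + g (uphalf (l u + l v)) + g ((l u + l v)./2).
Proof.
move=> uv; have vu : (v == u) = false by apply/negbTE; rewrite eq_sym.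
rewrite (bigD1 u) //= (bigD1 v) 1?eq_sym //=.
rewrite [in RHS](bigD1 u) //= [in RHS](bigD1 v) 1?eq_sym //=.
rewrite !ffunE eqxx vu eqxx.
under eq_bigr => i /andP[/negbTE iu /negbTE iv] do rewrite ffunE iu iv.
lra.
Qed.

Lemma tokens_step (l : load n) u v : u != v -> tokens (step l (u, v)) = tokens l.
Proof.
move=> uv; apply/eqP; rewrite -(eqr_nat rat) !tokensE.
have := sum_step l (fun k => (k%:R : rat)) uv => /=.
have := congr1 (fun k => (k%:R : rat)) (uphalf_addn_half (l u + l v)) => /=.
by rewrite !natrD => e1 e2; apply/eqP; lra.
Qed.

(* With S = l_u + l_v the new loads are S./2 + odd S and S./2, whose squares
   add up to S^2/2 + (odd S)/2 = l_u^2 + l_v^2 - (l_u - l_v)^2/2 + (odd S)/2. *)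
Lemma Phi_step (l : load n) u v : u != v ->
  Phi (step l (u, v)) <= Phi l + 1 / 2 - ((l u)%:R - (l v)%:R) ^+ 2 / 2.
Proof.
move=> uv; rewrite !PhiE tokens_step //.
have := sum_step l (fun k => (k%:R : rat) ^+ 2) uv.
set S := (l u + l v)%N.
have hS : (odd S + S./2 * 2 = S)%N by rewrite muln2 odd_double_half.
have o1 : ((odd S)%:R : rat) * (odd S)%:R = (odd S)%:R by case: (odd S); rewrite ?mulr0 ?mulr1.
have o2 : 0 <= ((odd S)%:R : rat) <= 1 by case: (odd S); rewrite /= ?lexx ?ler01.
move: hS => /(congr1 (fun k => (k%:R : rat))).
rewrite uphalf_half !natrD natrM.
set o := ((odd _)%:R : rat) in o1 o2 *; set h := ((_ ./2)%:R : rat).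
set a := ((l u)%:R : rat); set b := ((l v)%:R : rat).
nra.
Qed.

Lemma sum_sqr_diff (l : load n) :
  \sum_(p : 'I_n * 'I_n | p.1 != p.2) (((l p.1)%:R : rat) - (l p.2)%:R) ^+ 2
  = 2 * n%:R * Phi l.
Proof.
rewrite big_mkcond /=.
rewrite (eq_bigr (fun p : 'I_n * 'I_n => (((l p.1)%:R : rat) - (l p.2)%:R) ^+ 2)); last first.
  by move=> p _; case: eqP => [->|//]; rewrite subrr expr0n.
rewrite -(pair_bigA _ (fun u v => (((l u)%:R : rat) - (l v)%:R) ^+ 2)) /=.
under eq_bigr => u _ do under eq_bigr => v _ do rewrite -sqrrN opprB.
under eq_bigr do rewrite sum_sqrB card_ord.
rewrite big_split /= sumrB -mulr_suml -!mulr_sumr sumr_const card_ord PhiE // tokensE.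
by rewrite -mulr_natl; field.
Qed.

End Potential.

Definition npairs n : rat := \sum_(p : 'I_n * 'I_n | p.1 != p.2) 1.

Lemma npairsE n : npairs n = (n * n.-1)%:R.
Proof.
rewrite /npairs (eq_bigl (fun p : 'I_n * 'I_n => xpredT p.1 && (p.2 != p.1))); last first.
  by move=> p; rewrite /= eq_sym.
rewrite -(pair_big_dep xpredT (fun u v => v != u) (fun _ _ => (1 : rat))) /=.
rewrite (eq_bigr (fun _ => (n.-1)%:R)); last first.
  by move=> u _; rewrite (eq_bigl (predC1 u)) // sumr_const cardC1 card_ord.
by rewrite sumr_const card_ord natrM mulrC mulr_natr.
Qed.

Definition contraction n : rat := 1 - (2 * n)%:R^-1.

Lemma contraction_ge0 n : 0 <= contraction n.
Proof.
rewrite /contraction subr_ge0; case: n => [|n]; first by rewrite muln0 invr0 ler01.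
by rewrite invf_le1 ?ler1n ?ltr0n //; lia.
Qed.

Lemma contraction_le1 n : contraction n <= 1.
Proof. by rewrite /contraction lerBlDr lerDl invr_ge0 ler0n. Qed.

Lemma contraction_pow_le_half n : (0 < n)%N -> 2 * contraction n ^+ (2 * n) <= 1.
Proof.
move=> n_gt0; have np : (0 : rat) < (2 * n)%:R by rewrite ltr0n muln_gt0.
have x_ge0 : 0 <= (2 * n)%:R^-1 :> rat by rewrite invr_ge0 ltW.
have x_le1 : (2 * n)%:R^-1 <= 1 :> rat by rewrite invf_le1 // ler1n muln_gt0.
by have := Bernoulli_pow_le1 (2 * n) x_ge0 x_le1; rewrite mulfV ?gt_eqF // mulrC.
Qed.

Lemma sum_tupleS (R : nmodType) (T : finType) t (F : seq T -> R) :
  \sum_(s : t.+1.-tuple T) F s = \sum_(x : T) \sum_(s : t.-tuple T) F (x :: s).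
Proof.
rewrite pair_bigA /= (reindex (fun p : T * t.-tuple T => [tuple of p.1 :: p.2])) //=.
exists (fun s : t.+1.-tuple T => (thead s, [tuple of behead s])).
  by move=> [x s] _ /=; rewrite theadE; congr pair; apply: val_inj.
by move=> s _ /=; rewrite [RHS]tuple_eta.
Qed.

Fixpoint stays_high n (l : load n) (s : seq ('I_n * 'I_n)) : bool :=
  (n%:R <= Phi l) && (if s is p :: s' then stays_high (step l p) s' else true).

Lemma stays_highP n (l : load n) (s : seq ('I_n * 'I_n)) :
  (forall k, (k <= size s)%N -> n%:R <= Phi (foldl (@step n) l (take k s))) ->
  stays_high l s.
Proof.
elim: s l => [|p s IH] l high /=; first by rewrite (high 0%N).
by rewrite (high 0%N) // IH // => k k_le; apply: (high k.+1).
Qed.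

Lemma T1_gt_stays_high n (l0 : load n) t (s : t.-tuple ('I_n * 'I_n)) :
  T1_gt l0 s -> stays_high l0 s.
Proof.
move=> /forallP high; apply: stays_highP => k; rewrite size_tuple => k_le.
exact: (high (Ordinal (k_le : (k < t.+1)%N))).
Qed.

Section Process.
Variable n : nat.
Hypothesis n_ge2 : (2 <= n)%N.

Let n_gt0 : (0 < n)%N. Proof. exact: leq_trans n_ge2. Qed.

Lemma Phi_drift (l : load n) : n%:R <= Phi l ->
  \sum_(p : 'I_n * 'I_n | p.1 != p.2) Phi (step l p) <= npairs n * contraction n * Phi l.
Proof.
move=> Phi_ge_n.
apply: le_trans (_ : \sum_(p : 'I_n * 'I_n | p.1 != p.2)
   (Phi l + 1 / 2 - (((l p.1)%:R : rat) - (l p.2)%:R) ^+ 2 / 2) <= _).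
  by apply: ler_sum => -[u v] /= uv; apply: Phi_step.
rewrite sumrB -mulr_suml sum_sqr_diff //.
have -> : \sum_(p : 'I_n * 'I_n | p.1 != p.2) (Phi l + 1 / 2) = (Phi l + 1 / 2) * npairs n.
  by rewrite /npairs mulr_sumr; apply: eq_bigr => p _; rewrite mulr1.
rewrite npairsE /contraction natrM -subn1 natrB // natrM invfM.
have r2 : (2 : rat) <= n%:R by rewrite (ler_nat _ 2 n).
set r := (n%:R : rat) in r2 Phi_ge_n *.
have r_neq0 : r != 0 by rewrite gt_eqF //; lra.
have -> : r * (r - 1) * (1 - 2^-1 * r^-1) * Phi l =
          r * (r - 1) * Phi l - (r - 1) / 2 * Phi l by field.
(* The total rounding loss r (r - 1) / 2 is absorbed because Phi l >= r. *)
nra.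
Qed.

Definition num_admissible t : rat :=
  \sum_(s : t.-tuple ('I_n * 'I_n)) (if admissible s then 1 else 0).

Lemma num_admissible_ge0 t : 0 <= num_admissible t.
Proof. by apply: sumr_ge0 => s _; case: (admissible _). Qed.

Lemma num_admissibleS t : num_admissible t.+1 = npairs n * num_admissible t.
Proof.
rewrite /num_admissible (sum_tupleS t (fun s => if admissible s then (1 : rat) else 0)).
rewrite /npairs mulr_suml [RHS]big_mkcond /=.
apply: eq_bigr => x _; rewrite /admissible /=.
case: (x.1 != x.2) => /=; last by rewrite big1.
by rewrite mul1r.
Qed.

(* The expectation of Phi(l(t)) on the event that Phi stayed >= n, scaled by
   the number of admissible choice sequences. *)
Lemma sum_stays_high_Phi t (l0 : load n) :
  \sum_(s : t.-tuple ('I_n * 'I_n))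
     (if admissible s && stays_high l0 s then Phi (foldl (@step n) l0 s) else 0)
  <= num_admissible t * contraction n ^+ t * Phi l0.
Proof.
elim: t l0 => [|t IH] l0.
  rewrite expr0 mulr1 /num_admissible mulr_suml; apply: ler_sum => s _.
  by rewrite (size0nil (size_tuple s)) /= andbT mul1r; case: ifP; rewrite ?Phi_ge0.
have rhs_ge0 : 0 <= num_admissible t.+1 * contraction n ^+ t.+1 * Phi l0.
  by rewrite !mulr_ge0 ?num_admissible_ge0 ?exprn_ge0 ?contraction_ge0 ?Phi_ge0.
rewrite (sum_tupleS t (fun s => if admissible s && stays_high l0 s
                                then Phi (foldl (@step n) l0 s) else 0)).
case: (boolP (n%:R <= Phi l0)) => high; last first.
  by rewrite big1 // => x _; rewrite big1 // => s _; rewrite /= (negbTE high) andbF.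
have -> : \sum_(x : 'I_n * 'I_n) \sum_(s : t.-tuple ('I_n * 'I_n))
   (if admissible (x :: s) && stays_high l0 (x :: s) then Phi (foldl (@step n) l0 (x :: s)) else 0)
   = \sum_(x | x.1 != x.2) \sum_(s : t.-tuple ('I_n * 'I_n))
   (if admissible s && stays_high (step l0 x) s then Phi (foldl (@step n) (step l0 x) s) else 0).
  rewrite [RHS]big_mkcond /=; apply: eq_bigr => x _; rewrite /admissible /=.
  by case: (x.1 != x.2) => /=; [apply: eq_bigr => s _; rewrite high | rewrite big1].
apply: le_trans (_ : \sum_(x | x.1 != x.2)
   num_admissible t * contraction n ^+ t * Phi (step l0 x) <= _).
  by apply: ler_sum => x _; apply: IH.
rewrite -mulr_sumr num_admissibleS exprS.
have -> : npairs n * num_admissible t * (contraction n * contraction n ^+ t) * Phi l0 =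
          num_admissible t * contraction n ^+ t * (npairs n * contraction n * Phi l0) by ring.
by rewrite ler_wpM2l ?Phi_drift // mulr_ge0 ?num_admissible_ge0 ?exprn_ge0 ?contraction_ge0.
Qed.
End Process.

Lemma card_set_sum (T : finType) (P : pred T) :
  (#|[set s | P s]|%:R : rat) = \sum_s (if P s then 1 else 0).
Proof. by rewrite -sum1dep_card natr_sum big_mkcond. Qed.

(* Markov's inequality: on the event {T_1 > t} the final potential is >= n. *)
Lemma prob_T1_gt_le n (l0 : load n) t : (2 <= n)%N ->
  prob_T1_gt l0 t <= contraction n ^+ t * Phi l0 / n%:R.
Proof.
move=> n_ge2; have n_pos : (0 : rat) < n%:R by rewrite ltr0n; apply: leq_trans n_ge2.
rewrite /prob_T1_gt !card_set_sum -/(num_admissible n t).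
have [A_gt0 | A_le0] := ltrP 0 (num_admissible n t); last first.
  have -> : num_admissible n t = 0 by apply/le_anti; rewrite A_le0 num_admissible_ge0.
  by rewrite invr0 mulr0 !mulr_ge0 ?invr_ge0 ?exprn_ge0 ?contraction_ge0 ?Phi_ge0 ?ltW.
rewrite ler_pdivrMr // mulrAC ler_pdivlMr // mulrC [X in _ <= X]mulrC !mulrA.
apply: le_trans (sum_stays_high_Phi n_ge2 t l0).
rewrite mulr_sumr; apply: ler_sum => s _.
case: (admissible s) => /=; last by rewrite mulr0.
case T1 : (T1_gt l0 s); last by rewrite mulr0; case: (stays_high _ _); rewrite ?Phi_ge0.
rewrite (T1_gt_stays_high T1) mulr1.
move/forallP: T1 => /(_ ord_max).
by rewrite /loads_after take_oversize // size_tuple.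
Qed.

Lemma ltn_pow2_trunc_log m : (m < 2 ^ (trunc_log 2 m + 1))%N.
Proof. by rewrite addn1; apply: trunc_log_ltn. Qed.

Theorem lemma2 :
  exists C c : nat,
  forall (n : nat) (l0 : load n),
    (2 <= n)%N -> (1 <= disc l0)%N ->
    (prob_T1_gt l0 (C * (n * trunc_log 2 n + n * trunc_log 2 (disc l0))) 
       <= c%:R / n%:R)%R.
Proof.
exists 8%N, 1%N => n l0 n_ge2 _.
have n_gt0 : (0 < n)%N by apply: leq_trans n_ge2.
set a := trunc_log 2 n; set b := trunc_log 2 (disc l0).
have a_gt0 : (0 < a)%N by rewrite trunc_log_gt0.
set j := (a + 1 + 2 * (b + 1))%N.
have t_ge : (2 * n * j <= 8 * (n * a + n * b))%N by rewrite /j; nia.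
apply: le_trans (prob_T1_gt_le l0 _ n_ge2) _.
rewrite ler_pM2r ?invr_gt0 ?ltr0n //.
have Phi0_le : Phi l0 <= (2 ^ j)%N%:R.
  apply: le_trans (Phi_le_disc n_gt0 l0) _.
  rewrite -natrX -natrM ler_nat /j expnD (mulnC 2) expnM.
  by apply: leq_mul; [|rewrite leq_exp2r //]; apply/ltnW/ltn_pow2_trunc_log.
have q_ge0 := contraction_ge0 n.
apply: le_trans (_ : contraction n ^+ (2 * n * j) * (2 ^ j)%N%:R <= _).
  apply: ler_pM => //; [exact: exprn_ge0 | exact: Phi_ge0 |].
  by apply: ler_wiXn2l => //; exact: contraction_le1.
rewrite natrX exprM -exprMn mulrC; apply: exprn_ile1.
  by apply: mulr_ge0 => //; apply: exprn_ge0.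
exact: contraction_pow_le_half.
Qed.
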